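(* Under the role-persistence and uniform-bound assumptions below, with $\mathbf M_t=\mathbf A_t\mathbf W_t$, $$\sup_{t\in\mathbb N}\|\mathbf A_{t+1}\mathbf W_{t+1}\mathbf A_t\mathbf W_t\|\le\bar\alpha<1.$$
   Context: Fix a finite node set $\mathcal V$ with $n=|\mathcal V|$ and a sequence of directed graphs $G_t=(\mathcal V,\mathcal E_t)$, $t\in\mathbb N$. In $G_t$, a node $i$ is a pure obligee if it has no outgoing edge in $\mathcal E_t$, and a principal otherwise. For each $t$, $\mathbf W_t=(w^t_{ij})$ is an entrywise nonnegative $n\times n$ matrix with $w^t_{ij}>0$ only if $(j,i)\in\mathcal E_t$ and with every row sum at most $1$; $\mathbf A_t=\mathrm{diag}(\alpha_i^t)$ with $\alpha_i^t\in[0,1]$, and $\alpha_i^t=1$ whenever $i$ is a pure obligee in $G_t$. Role persistence: for every $i$ and $t$, $i$ is a pure obligee in $G_t$ if and only if it is a pure obligee in $G_{t+1}$ (pure obligees stay pure obligees and principals stay principals). Uniform bound: there is $\bar\alpha\in(0,1)$ such that $\alpha_i^t\le\bar\alpha$ for every $t$ and every node $i$ that is not a pure obligee in $G_t$. $\|\mathbf M\|$ is the induced $\ell_\infty$ matrix norm (maximum absolute row sum). *)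

From mathcomp Require Import all_boot all_order all_algebra.
Set Implicit Arguments. Unset Strict Implicit. Unset Printing Implicit Defensive.
Import Order.TTheory GRing.Theory Num.Theory.
Local Open Scope ring_scope.

(* Node set V = 'I_n.  A time-indexed directed graph is E : nat -> rel 'I_n,
   where E t j i means (j,i) is an edge of G_t (from j to i). *)
Definition pure_obligee (n : nat) (E : nat -> rel 'I_n) (t : nat) (i : 'I_n) : Prop :=
  forall j : 'I_n, ~~ E t i j.

(* Induced l_infinity matrix norm: maximum absolute row sum. *)
Definition infnorm (R : realFieldType) (m k : nat) (M : 'M[R]_(m, k)) : R :=
  \big[Num.max/0]_(i < m) \sum_(j < k) `|M i j|.

Definition diagA (R : realFieldType) (n : nat) (alpha : 'I_n -> R) : 'M[R]_n :=
  diag_mx (\row_i alpha i).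

From mathcomp Require Import all_boot all_order all_algebra.
Set Implicit Arguments. Unset Strict Implicit. Unset Printing Implicit Defensive.
Import Order.TTheory GRing.Theory Num.Theory.
Local Open Scope ring_scope.

(* Row i of M_{t+1} M_t sums to the M_{t+1}-weighted average of the row sums
   of M_t.  Row k of M_t = A_t W_t sums to at most alpha_k^t, and M_{t+1} only
   puts weight on nodes k with an outgoing edge in G_{t+1}; by role persistence
   these are principals of G_t, so alpha_k^t <= abar and the average is at most
   abar. *)

Lemma infnorm_le (R : realFieldType) (m k : nat) (M : 'M[R]_(m, k)) (c : R) :
  0 <= c -> (forall i, \sum_j `|M i j| <= c) -> infnorm M <= c.
Proof.
move=> c_ge0 rowM; rewrite /infnorm; elim/big_ind: _ => // x y hx hy.
by rewrite ge_max hx hy.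
Qed.

Lemma mulmx_row_sum (R : pzSemiRingType) (m p q : nat)
    (P : 'M[R]_(m, p)) (Q : 'M[R]_(p, q)) (i : 'I_m) :
  \sum_j (P *m Q) i j = \sum_k P i k * \sum_j Q k j.
Proof.
under eq_bigr => j _ do rewrite mxE.
by rewrite exchange_big; apply: eq_bigr => k _; rewrite mulr_sumr.
Qed.

Lemma mulmx_ge0 (R : realFieldType) (m p q : nat)
    (P : 'M[R]_(m, p)) (Q : 'M[R]_(p, q)) :
  (forall i k, 0 <= P i k) -> (forall k j, 0 <= Q k j) ->
  forall i j, 0 <= (P *m Q) i j.
Proof. by move=> P0 Q0 i j; rewrite mxE sumr_ge0 // => k _; rewrite mulr_ge0. Qed.

Lemma mulmx_row_sum_le (R : realFieldType) (m p q : nat)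
    (P : 'M[R]_(m, p)) (Q : 'M[R]_(p, q)) (i : 'I_m) (c : R) :
  (forall k, 0 <= P i k) -> \sum_k P i k <= 1 -> 0 <= c ->
  (forall k, P i k != 0 -> \sum_j Q k j <= c) ->
  \sum_j (P *m Q) i j <= c.
Proof.
move=> P0 rowP c_ge0 rowQ; rewrite mulmx_row_sum.
apply: (@le_trans _ _ (\sum_k P i k * c)); last by rewrite -mulr_suml ler_piMl.
apply: ler_sum => k _; have [->|Pik_neq0] := eqVneq (P i k) 0; first by rewrite !mul0r.
by rewrite ler_wpM2l ?rowQ.
Qed.

Lemma diagA_mulmxE (R : realFieldType) (n : nat) (a : 'I_n -> R) (W : 'M[R]_n) i j :
  (diagA a *m W) i j = a i * W i j.
Proof. by rewrite /diagA mul_diag_mx !mxE. Qed.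

Section PersistentRoles.

Variables (R : realFieldType) (n : nat) (E : nat -> rel 'I_n).
Variables (W : nat -> 'M[R]_n) (alpha : nat -> 'I_n -> R) (abar : R).
Hypothesis W_ge0 : forall t i j, 0 <= W t i j.
Hypothesis W_on_edges : forall t i j, 0 < W t i j -> E t j i.
Hypothesis W_row_sum : forall t i, \sum_(j < n) W t i j <= 1.
Hypothesis alpha01 : forall t i, 0 <= alpha t i <= 1.
Hypothesis role_persistence :
  forall t i, pure_obligee E t i <-> pure_obligee E t.+1 i.
Hypothesis alpha_principal : forall t i, ~ pure_obligee E t i -> alpha t i <= abar.

Let M t := diagA (alpha t) *m W t.

Lemma M_ge0 t i j : 0 <= M t i j.
Proof. by rewrite /M diagA_mulmxE mulr_ge0 ?W_ge0 //; case/andP: (alpha01 t i). Qed.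

Lemma M_row_sum_le_alpha t k : \sum_j M t k j <= alpha t k.
Proof.
have [a_ge0 _] := andP (alpha01 t k).
under eq_bigr => j _ do rewrite /M diagA_mulmxE.
by rewrite -mulr_sumr ler_piMr ?W_row_sum.
Qed.

Lemma M_row_sum_le1 t i : \sum_k M t i k <= 1.
Proof. by apply: le_trans (M_row_sum_le_alpha t i) _; case/andP: (alpha01 t i). Qed.

Lemma M_succ_support t i k : M t.+1 i k != 0 -> alpha t k <= abar.
Proof.
move=> Mik_neq0; apply: alpha_principal => /role_persistence /(_ i).
have W_pos : 0 < W t.+1 i k.
  rewrite lt_def W_ge0 andbT; apply: contraNneq Mik_neq0 => W0.
  by rewrite /M diagA_mulmxE W0 mulr0.
by rewrite W_on_edges.
Qed.

Lemma infnorm_M_succ_M_le t : 0 <= abar -> infnorm (M t.+1 *m M t) <= abar.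
Proof.
move=> abar_ge0; apply: infnorm_le => // i.
have MM_ge0 := mulmx_ge0 (M_ge0 t.+1) (M_ge0 t).
rewrite (eq_bigr (fun j => (M t.+1 *m M t) i j)) => [|j _]; last first.
  exact/ger0_norm/MM_ge0.
apply: mulmx_row_sum_le => // [k||k /M_succ_support]; first exact: M_ge0.
  exact: M_row_sum_le1.
exact/le_trans/M_row_sum_le_alpha.
Qed.

End PersistentRoles.

Theorem mainTheorem13 (R : realFieldType) (n : nat)
  (E : nat -> rel 'I_n) (W : nat -> 'M[R]_n) (alpha : nat -> 'I_n -> R)
  (abar : R) :
  (forall t i j, 0 <= W t i j) ->
  (forall t i j, 0 < W t i j -> E t j i) ->
  (forall t i, \sum_(j < n) W t i j <= 1) ->
  (forall t i, 0 <= alpha t i <= 1) ->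
  (forall t i, pure_obligee E t i -> alpha t i = 1) ->
  (forall t i, pure_obligee E t i <-> pure_obligee E t.+1 i) ->
  0 < abar -> abar < 1 ->
  (forall t i, ~ pure_obligee E t i -> alpha t i <= abar) ->
  (forall t : nat,
     infnorm (diagA (alpha t.+1) *m W t.+1 *m (diagA (alpha t) *m W t)) <= abar)
  /\ abar < 1.
Proof.
(* Only the principals' bound matters, so [alpha = 1] at pure obligees is unused. *)
move=> W_ge0 W_on_edges W_row_sum alpha01 _ role_persistence abar_gt0 abar_lt1
  alpha_principal; split=> // t.
exact: (infnorm_M_succ_M_le W_ge0 W_on_edges W_row_sum alpha01 role_persistence
  alpha_principal t (ltW abar_gt0)).
Qed.
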